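(* Let $S$ be a right ample semigroup embedded as a unary semigroup into an inverse semigroup $Q$ (so $a^*=a^{-1}a$ for all $a\in S$). Then for all $a,b,c,x\in S$: (i) $a\leq_{\mathcal{L}^Q}b$ if and only if $a^*=a^*b^*$, if and only if $a\leq_{\mathcal{L}^*}b$; (ii) $L_a\wedge L_b=L_c$ if and only if $c^*=a^*b^*$; (iii) $L_a\wedge L_b=L_{xa}$ if and only if $ab^*=x^*a$. Here $L_a$ denotes the $\mathcal{L}$-class of $a$ in $Q$ and $\wedge$ the meet in the semilattice $Q/\mathcal{L}$.
   Context: $a^{-1}$ is the unique inverse in $Q$; $a\leq_{\mathcal{L}^Q}b$ iff $Q^1a\subseteq Q^1b$, and $Q/\mathcal{L}$ is ordered accordingly (it is a meet semilattice). On $S$: $a\leq_{\mathcal{L}^*}b$ iff for all $x,y\in S^1$, $bx=by$ implies $ax=ay$; $a\,\mathcal{L}^*\,b$ iff $a\leq_{\mathcal{L}^*}b$ and $b\leq_{\mathcal{L}^*}a$. $S$ is right adequate if its idempotents commute and every $a$ is $\mathcal{L}^*$-related to a (unique) idempotent $a^*$; right ample if moreover $b^*a=a(ba)^*$ for all $a,b\in S$. *)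

Definition inverse_semigroup {Q : Type} (mul : Q -> Q -> Q) (inv : Q -> Q) : Prop :=
  (forall a b c, mul (mul a b) c = mul a (mul b c)) /\
  (forall a, mul (mul a (inv a)) a = a) /\
  (forall a, mul (mul (inv a) a) (inv a) = inv a) /\
  (forall e f, mul e e = e -> mul f f = f -> mul e f = mul f e).

(* Multiplication by an element of Q^1 (None = adjoined identity). *)
Definition lmul1 {Q : Type} (mul : Q -> Q -> Q) (x : option Q) (a : Q) : Q :=
  match x with None => a | Some q => mul q a end.
Definition rmul1 {Q : Type} (mul : Q -> Q -> Q) (a : Q) (x : option Q) : Q :=
  match x with None => a | Some q => mul a q end.

Definition leLQ {Q : Type} (mul : Q -> Q -> Q) (a b : Q) : Prop :=
  forall y, (exists x : option Q, y = lmul1 mul x a) ->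
            (exists x : option Q, y = lmul1 mul x b).

(* L_a ∧ L_b = L_c in the meet semilattice Q/L (c is a greatest lower bound). *)
Definition L_meet_is {Q : Type} (mul : Q -> Q -> Q) (a b c : Q) : Prop :=
  leLQ mul c a /\ leLQ mul c b /\
  (forall d, leLQ mul d a -> leLQ mul d b -> leLQ mul d c).

Definition inS1 {Q : Type} (S : Q -> Prop) (x : option Q) : Prop :=
  match x with None => True | Some q => S q end.

Definition leLstar {Q : Type} (mul : Q -> Q -> Q) (S : Q -> Prop) (a b : Q) : Prop :=
  forall x y, inS1 S x -> inS1 S y ->
    rmul1 mul b x = rmul1 mul b y -> rmul1 mul a x = rmul1 mul a y.

Definition Lstar {Q : Type} (mul : Q -> Q -> Q) (S : Q -> Prop) (a b : Q) : Prop :=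
  leLstar mul S a b /\ leLstar mul S b a.

Definition subsemigroup {Q : Type} (mul : Q -> Q -> Q) (S : Q -> Prop) : Prop :=
  forall a b, S a -> S b -> S (mul a b).

Definition right_adequate {Q : Type} (mul : Q -> Q -> Q) (S : Q -> Prop)
    (star : Q -> Q) : Prop :=
  (forall e f, S e -> S f -> mul e e = e -> mul f f = f -> mul e f = mul f e) /\
  (forall a, S a ->
     S (star a) /\ mul (star a) (star a) = star a /\ Lstar mul S a (star a) /\
     (forall e, S e -> mul e e = e -> Lstar mul S a e -> e = star a)).

Definition right_ample {Q : Type} (mul : Q -> Q -> Q) (S : Q -> Prop)
    (star : Q -> Q) : Prop :=
  right_adequate mul S star /\
  (forall a b, S a -> S b -> mul (star b) a = mul a (star (mul b a))).

(** In an inverse semigroup, [a <=_L b] holds iff [a = a b^*] iff [a^* = a^* b^*], so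
    [L_a |-> a^*] identifies [Q/L] with the semilattice of idempotents [a^*]; this gives
    the first equivalence of (i) and, taking meets of idempotents, (ii).  Inside [S],
    every [a] is [L*]-related to [a^*] and [<=_L*] is stable under left multiplication,
    which turns [a^* = a^* b^*] into [a <=_L* b] and back.  For (iii), right ampleness
    rewrites [x^* a] as [a (xa)^*]; since [(xa)^* <= a^*], left multiplication by [a]
    (undone by [a^{-1}]) shows [(xa)^* = a^* b^*] iff [a (xa)^* = a b^*]. *)

From Stdlib Require Import Setoid.

Section InverseSemigroup.

Context {Q : Type} {mul : Q -> Q -> Q} {inv : Q -> Q}.
Hypothesis HQ : inverse_semigroup mul inv.

Local Infix "⋅" := mul (at level 40, left associativity).
Local Notation "a ^*" := (inv a ⋅ a) (at level 2, left associativity, format "a ^*").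

Let mul_assoc : forall a b c, a ⋅ b ⋅ c = a ⋅ (b ⋅ c) := proj1 HQ.
Let mul_inv_mul : forall a, a ⋅ inv a ⋅ a = a := proj1 (proj2 HQ).
Let inv_mul_inv : forall a, inv a ⋅ a ⋅ inv a = inv a := proj1 (proj2 (proj2 HQ)).
Let idempotents_commute : forall e f, e ⋅ e = e -> f ⋅ f = f -> e ⋅ f = f ⋅ e :=
  proj2 (proj2 (proj2 HQ)).

Lemma mul_star (a : Q) : a ⋅ a^* = a.
Proof. rewrite <- mul_assoc. apply mul_inv_mul. Qed.

Lemma star_idem (a : Q) : a^* ⋅ a^* = a^*.
Proof. rewrite <- mul_assoc, inv_mul_inv. reflexivity. Qed.

Lemma star_comm (a b : Q) : a^* ⋅ b^* = b^* ⋅ a^*.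
Proof. apply idempotents_commute; apply star_idem. Qed.

Lemma leLQ_iff_mul_star_r (a b : Q) : leLQ mul a b <-> a = a ⋅ b^*.
Proof.
  split.
  - intro Hab. destruct (Hab a (ex_intro _ None eq_refl)) as [[q|] Ha]; simpl in Ha.
    + rewrite Ha, (mul_assoc q b), mul_star. reflexivity.
    + rewrite Ha. symmetry. apply mul_star.
  - intros Ha y [[q|] Hy]; simpl in Hy.
    + exists (Some (q ⋅ (a ⋅ inv b))). simpl.
      rewrite Hy, Ha at 1. rewrite !mul_assoc. reflexivity.
    + exists (Some (a ⋅ inv b)). simpl. rewrite Hy, mul_assoc. exact Ha.
Qed.

Lemma mul_star_r_iff_star (a b : Q) : a = a ⋅ b^* <-> a^* = a^* ⋅ b^*.
Proof.
  split; intro H.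
  - rewrite mul_assoc, <- H. reflexivity.
  - rewrite <- (mul_star a) at 1. rewrite H, <- mul_assoc, mul_star. reflexivity.
Qed.

Lemma leLQ_iff_star (a b : Q) : leLQ mul a b <-> a^* = a^* ⋅ b^*.
Proof. rewrite leLQ_iff_mul_star_r. apply mul_star_r_iff_star. Qed.

Lemma star_meet_mul_star_l (a b : Q) : a^* ⋅ b^* ⋅ a^* = a^* ⋅ b^*.
Proof. rewrite (star_comm a b), (mul_assoc (b^*)), star_idem. reflexivity. Qed.

Lemma star_meet_mul_star_r (a b : Q) : a^* ⋅ b^* ⋅ b^* = a^* ⋅ b^*.
Proof. rewrite (mul_assoc (a^*)), star_idem. reflexivity. Qed.

Lemma L_meet_is_iff_star (a b c : Q) : L_meet_is mul a b c <-> c^* = a^* ⋅ b^*.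
Proof.
  unfold L_meet_is. split.
  - intros [Hca [Hcb Hglb]].
    assert (Hmeet_c : leLQ mul (a^* ⋅ b^*) c).
    { apply Hglb; apply leLQ_iff_mul_star_r; symmetry;
        [apply star_meet_mul_star_l | apply star_meet_mul_star_r]. }
    rewrite leLQ_iff_mul_star_r in Hmeet_c.
    rewrite leLQ_iff_star in Hca, Hcb.
    transitivity (c^* ⋅ a^* ⋅ b^*).
    { rewrite <- Hca. exact Hcb. }
    rewrite Hmeet_c, (star_comm c a), (mul_assoc (a^*) (c^*) (b^*)), (star_comm c b),
      <- (mul_assoc (a^*) (b^*) (c^*)).
    reflexivity.
  - intro Hc. split; [|split].
    + apply leLQ_iff_star. rewrite Hc. symmetry. apply star_meet_mul_star_l.
    + apply leLQ_iff_star. rewrite Hc. symmetry. apply star_meet_mul_star_r.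
    + intros d Hda Hdb. rewrite leLQ_iff_mul_star_r in Hda, Hdb |- *.
      rewrite Hc, <- mul_assoc, <- Hda. exact Hdb.
Qed.

Lemma star_mul_l_absorb (x a : Q) : (x ⋅ a)^* ⋅ a^* = (x ⋅ a)^*.
Proof. rewrite !mul_assoc, mul_star. reflexivity. Qed.

Lemma star_mul_l_eq_iff (x a b : Q) : (x ⋅ a)^* = a^* ⋅ b^* <-> a ⋅ b^* = a ⋅ (x ⋅ a)^*.
Proof.
  split; intro H.
  - rewrite H, <- (mul_assoc a (a^*)), mul_star. reflexivity.
  - rewrite <- star_mul_l_absorb, (star_comm (x ⋅ a) a), (mul_assoc (inv a) a ((x ⋅ a)^*)),
      <- H, <- (mul_assoc (inv a) a (b^*)).
    reflexivity.
Qed.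

End InverseSemigroup.

Section RightAdequate.

Context {Q : Type} {mul : Q -> Q -> Q} {S : Q -> Prop} {star : Q -> Q}.
Hypothesis mul_assoc : forall a b c, mul (mul a b) c = mul a (mul b c).

Lemma leLstar_trans (a b c : Q) :
  leLstar mul S a b -> leLstar mul S b c -> leLstar mul S a c.
Proof. intros Hab Hbc x y Sx Sy E. apply Hab, Hbc; assumption. Qed.

Lemma rmul1_mul (p q : Q) (o : option Q) : rmul1 mul (mul p q) o = mul p (rmul1 mul q o).
Proof. destruct o; simpl; [apply mul_assoc | reflexivity]. Qed.

Lemma leLstar_mul_l (p q : Q) : leLstar mul S (mul p q) q.
Proof. intros x y _ _ E. rewrite !rmul1_mul, E. reflexivity. Qed.

Lemma leLstar_idem_r (e f : Q) :
  leLstar mul S e f -> S f -> mul f f = f -> mul e f = e.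
Proof. intros Hef Sf Hf. exact (Hef (Some f) None Sf I Hf). Qed.

Lemma star_le_iff_leLstar (Hadq : right_adequate mul S star) (a b : Q) :
  S a -> S b -> (star a = mul (star a) (star b) <-> leLstar mul S a b).
Proof.
  intros Sa Sb.
  destruct Hadq as [_ Hstar].
  destruct (Hstar a Sa) as [_ [_ [[Ha_sa Hsa_a] _]]].
  destruct (Hstar b Sb) as [Ssb [Hsb [[Hb_sb Hsb_b] _]]].
  split; intro H.
  - apply (leLstar_trans _ _ _ Ha_sa). rewrite H.
    exact (leLstar_trans _ _ _ (leLstar_mul_l _ _) Hsb_b).
  - symmetry. apply leLstar_idem_r; [|exact Ssb | exact Hsb].
    exact (leLstar_trans _ _ _ Hsa_a (leLstar_trans _ _ _ H Hb_sb)).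
Qed.

End RightAdequate.

Theorem lemma4p7 (Q : Type) (mul : Q -> Q -> Q) (inv : Q -> Q)
  (HQ : inverse_semigroup mul inv)
  (S : Q -> Prop) (HS : subsemigroup mul S)
  (Hamp : right_ample mul S (fun a => mul (inv a) a)) :
  let star := fun a => mul (inv a) a in
  forall a b c x, S a -> S b -> S c -> S x ->
    ((leLQ mul a b <-> star a = mul (star a) (star b)) /\
     (star a = mul (star a) (star b) <-> leLstar mul S a b)) /\
    (L_meet_is mul a b c <-> star c = mul (star a) (star b)) /\
    (L_meet_is mul a b (mul x a) <-> mul a (star b) = mul (star x) a).
Proof.
  intros star a b c x Sa Sb _ Sx. subst star. cbv beta.
  destruct Hamp as [Hadq Hample].
  assert (Hxa : mul (mul (inv x) x) a = mul a (mul (inv (mul x a)) (mul x a)))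
    by exact (Hample a x Sa Sx).
  split; [split | split].
  - exact (leLQ_iff_star HQ a b).
  - exact (star_le_iff_leLstar (proj1 HQ) Hadq a b Sa Sb).
  - exact (L_meet_is_iff_star HQ a b c).
  - rewrite (L_meet_is_iff_star HQ), Hxa. exact (star_mul_l_eq_iff HQ x a b).
Qed.
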